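(* Let $K\ge1$, $\Delta_0,B>0$, and for $k=1,\dots,K$ let $m_k\ge0$, $v_k\ge0$. Let $\mathcal{G}\subset\mathbb{R}^K$ be the set of $\mathbf{r}$ for which there exist $\mathbf{p},\mathbf{y}\in\mathbb{R}^K$ and a $2K\times2K$ real matrix $\mathbf{H}=\begin{bmatrix}\mathbf{H}^{xx}&\mathbf{H}^{x\phi}\\(\mathbf{H}^{x\phi})^{\rm T}&\mathbf{H}^{\phi\phi}\end{bmatrix}$ satisfying: $r_k\ge0$; $r_k\le\Delta_0B\,p_k\log_2(1+y_k/p_k)$; $0\le p_k\le1$; $\sum_kp_k\le1$; $H^{x\phi}_{k,k}=y_k-p_km_k$; $H^{\phi\phi}_{k,k}=v_k$ and $H^{\phi\phi}_{i,j}=0$ for $i\neq j$; $H^{xx}_{k,k}\le p_k-p_k^2$; $\sum_{i,j}H^{xx}_{i,j}\le\sum_ip_i-(\sum_ip_i)^2$; $\mathbf{H}\succeq0$ (all for every $k$). Let $f(\mathbf{r})=\sum_k\ln r_k$ and $\mathbf{r}^*=\arg\max_{\mathbf{r}\in\mathcal{G}}f(\mathbf{r})$. Consider the iteration (Algorithm 1) with tolerance $\hat\epsilon>0$: $\mathbf{w}^{(1)}=[1/\sqrt K,\dots,1/\sqrt K]^{\rm T}$; at iteration $i$, $\mathbf{r}^{(i)}=\arg\max_{\mathbf{r}\in\mathcal{G}}\langle\mathbf{w}^{(i)},\mathbf{r}\rangle$; if $|\langle\mathbf{w}^{(i)},\mathbf{r}^{(i)}-\mathbf{r}^*\rangle|<\hat\epsilon$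 the algorithm terminates, otherwise it sets $$a^{(i)}=\frac{\|\mathbf{r}^*-\mathbf{r}^{(i)}\|_2^2}{\langle\mathbf{w}^{(i)},\mathbf{r}^{(i)}-\mathbf{r}^*\rangle},\quad b^{(i)}=-\min_k\frac{r^*_k-r^{(i)}_k}{w^{(i)}_k},\quad \mathbf{u}^{(i)}=a^{(i)}\mathbf{w}^{(i)}+(\mathbf{r}^*-\mathbf{r}^{(i)})+b^{(i)}\mathbf{w}^{(i)},\quad \mathbf{w}^{(i+1)}=\frac{\mathbf{u}^{(i)}}{\|\mathbf{u}^{(i)}\|_2}.$$ If $\mathbf{w}^{(i)}>0$ and $\|\mathbf{w}^{(i)}\|_2=1$, then $\mathbf{w}^{(i+1)}>0$ and $\|\mathbf{w}^{(i+1)}\|_2=1$.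
   Context: $\langle\cdot,\cdot\rangle$ is the Euclidean inner product; vector inequalities $>0$ are componentwise strict; $\mathbf{H}\succeq0$ means positive semidefinite; $p\log_2(1+y/p)$ is understood as its perspective (value $0$ at $p=0$). $\mathbf{w}^{(i+1)}$ is only computed when iteration $i$ does not terminate. *)

From HB Require Import structures.
From mathcomp Require Import all_boot all_order all_algebra.
From mathcomp Require Import reals exp.
Set Implicit Arguments. Unset Strict Implicit. Unset Printing Implicit Defensive.
Import Order.TTheory GRing.Theory Num.Theory.
Local Open Scope ring_scope.

Section Defs.
Variable R : realType.

Definition dotp (K : nat) (w r : 'I_K -> R) : R := \sum_(k < K) w k * r k.
Definition norm2 (K : nat) (w : 'I_K -> R) : R := Num.sqrt (dotp w w).

(* minimum over k of g k (meaningful for K >= 1: the head of the nonempty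
   list of values is one of them) *)
Definition min_over (K : nat) (g : 'I_K -> R) : R :=
  let s := [seq g k | k <- enum 'I_K] in foldr Num.min (head 0 s) s.

Definition log2 (x : R) : R := ln x / ln 2.

(* r <= D0 * B * p log2(1 + y/p), where p log2(1+y/p) is the perspective
   function: value 0 at p = 0, and -infinity (constraint infeasible) when
   p > 0 and 1 + y/p <= 0 (outside the domain of log). *)
Definition rate_ok (D0 B r p y : R) : Prop :=
  (p = 0 /\ r <= 0) \/
  (0 < p /\ 0 < p + y /\ r <= D0 * B * (p * log2 (1 + y / p))).

Definition psd (n : nat) (H : 'M[R]_n) : Prop :=
  H^T = H /\ forall x : 'cV[R]_n, 0 <= (x^T *m H *m x) 0 0.

Definition inG (K : nat) (D0 B : R) (m v : 'I_K -> R) (r : 'I_K -> R) : Prop :=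
  exists (p y : 'I_K -> R) (H : 'M[R]_(K + K)),
    let Hxx := ulsubmx H in
    let Hxp := ursubmx H in
    let Hpp := drsubmx H in
    (forall k, 0 <= r k) /\
    (forall k, rate_ok D0 B (r k) (p k) (y k)) /\
    (forall k, 0 <= p k <= 1) /\
    \sum_(k < K) p k <= 1 /\
    (forall k, Hxp k k = y k - p k * m k) /\
    (forall i j, Hpp i j = if i == j then v i else 0) /\
    (forall k, Hxx k k <= p k - p k ^+ 2) /\
    \sum_(i < K) \sum_(j < K) Hxx i j <=
       \sum_(i < K) p i - (\sum_(i < K) p i) ^+ 2 /\
    psd H.

Definition f_obj (K : nat) (r : 'I_K -> R) : R := \sum_(k < K) ln (r k).

(* rstar = argmax f over G, with ln 0 = -infinity: rstar in G, rstar > 0, and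
   f(rstar) >= f(r) for every r in G with all components positive. *)
Definition is_argmax_f (K : nat) (D0 B : R) (m v : 'I_K -> R)
  (rs : 'I_K -> R) : Prop :=
  [/\ inG D0 B m v rs, (forall k, 0 < rs k) &
      forall r, inG D0 B m v r -> (forall k, 0 < r k) -> f_obj r <= f_obj rs].

Definition is_argmax_lin (K : nat) (D0 B : R) (m v : 'I_K -> R)
  (w r : 'I_K -> R) : Prop :=
  inG D0 B m v r /\ forall r', inG D0 B m v r' -> dotp w r' <= dotp w r.

Definition terminates (K : nat) (eps : R) (w ri rs : 'I_K -> R) : Prop :=
  `|dotp w (fun k => ri k - rs k)| < eps.

Definition next_w (K : nat) (w ri rs : 'I_K -> R) : 'I_K -> R :=
  let d := fun k => rs k - ri k in
  let a := dotp d d / dotp w (fun k => ri k - rs k) in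
  let b := - min_over (fun k => d k / w k) in
  let u := fun k => a * w k + d k + b * w k in
  fun k => u k / norm2 u.

Definition w_init (K : nat) : 'I_K -> R := fun _ => (Num.sqrt (K%:R))^-1.

End Defs.

From HB Require Import structures.
From mathcomp Require Import all_boot all_order all_algebra.
From mathcomp Require Import reals exp.
From mathcomp Require Import ring.
Import Order.TTheory GRing.Theory Num.Theory.
Local Open Scope ring_scope.

(* Since r^(i) maximises <w, .> over G and r* lies in G, the gap
   <w, r^(i) - r*> is nonnegative, and at least eps when the algorithm does
   not stop; hence a^(i) > 0.  The choice of b^(i) makes every component of
   (r* - r^(i)) + b^(i) w nonnegative, so u^(i) >= a^(i) w > 0 componentwise,
   and normalising keeps it positive and makes it a unit vector. *)

Section Vectors.
Context {R : realType} {K : nat}.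
Implicit Types (u w a b g : 'I_K -> R).

Lemma dotpBr w a b : dotp w (fun k => a k - b k) = dotp w a - dotp w b.
Proof. by rewrite /dotp -sumrB; apply: eq_bigr => k _; rewrite mulrBr. Qed.

Lemma dotp_self_ge0 u : 0 <= dotp u u.
Proof. by apply: sumr_ge0 => k _; rewrite -expr2 sqr_ge0. Qed.

Lemma dotp_self_eq0 u : dotp u u = 0 -> forall k, u k = 0.
Proof.
move=> u0 k; apply/eqP; rewrite -sqrf_eq0 expr2.
by apply/eqP/(psumr_eq0P _ u0) => // j _; rewrite -expr2 sqr_ge0.
Qed.

Lemma norm2_normalize u : 0 < dotp u u -> norm2 (fun k => u k / norm2 u) = 1.
Proof.
move=> u_gt0; have n_neq0 : norm2 u != 0 by rewrite gt_eqF ?sqrtr_gt0.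
rewrite {1}/norm2 (_ : dotp _ _ = dotp u u / norm2 u ^+ 2); last first.
  by rewrite /dotp mulr_suml; apply: eq_bigr => k _; field.
by rewrite /norm2 sqr_sqrtr ?dotp_self_ge0 // divff ?gt_eqF // sqrtr1.
Qed.

Lemma min_over_le g k : min_over g <= g k.
Proof.
rewrite /min_over; set s := map g _.
have : g k \in s by apply: map_f; rewrite mem_enum.
elim: s (head 0 s) => //= x s IH x0; rewrite in_cons => /orP[/eqP <- | gks].
  by rewrite ge_min lexx.
by rewrite ge_min IH ?orbT.
Qed.

Lemma min_over_ratio_shift_ge0 g w k :
  0 < w k -> 0 <= g k - min_over (fun j => g j / w j) * w k.
Proof.
move=> w_gt0; rewrite -[g k](divfK (lt0r_neq0 w_gt0)) -mulrBl.
by rewrite mulr_ge0 ?subr_ge0 ?min_over_le ?ltW.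
Qed.

End Vectors.

Section Update.
Context {R : realType} {K : nat}.
Hypothesis hK : (1 <= K)%N.
Context {w ri rs : 'I_K -> R}.
Hypothesis w_gt0 : forall k, 0 < w k.
Hypothesis gap_gt0 : 0 < dotp w (fun k => ri k - rs k).

Definition next_u : 'I_K -> R :=
  let d := fun k => rs k - ri k in
  let a := dotp d d / dotp w (fun k => ri k - rs k) in
  let b := - min_over (fun k => d k / w k) in
  fun k => a * w k + d k + b * w k.

Lemma next_wE : next_w w ri rs = fun k => next_u k / norm2 next_u.
Proof. by []. Qed.

Lemma next_u_gt0 k : 0 < next_u k.
Proof.
set d := fun k => rs k - ri k.
have d_gt0 : 0 < dotp d d.
  rewrite lt_def dotp_self_ge0 andbT; apply/eqP => /dotp_self_eq0 d0.
  move: gap_gt0; rewrite /dotp big1 ?ltxx // => j _.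
  by rewrite -opprB [_ - _]d0 oppr0 mulr0.
rewrite /next_u -addrA ltr_pwDl ?mulr_gt0 ?invr_gt0 //.
by rewrite mulNr (min_over_ratio_shift_ge0 (fun j => rs j - ri j)).
Qed.

Lemma next_w_gt0_unit :
  (forall k, 0 < next_w w ri rs k) /\ norm2 (next_w w ri rs) = 1.
Proof.
have u_gt0 : 0 < dotp next_u next_u.
  rewrite lt_def dotp_self_ge0 andbT; apply/eqP => /dotp_self_eq0.
  by move/(_ (Ordinal hK))/eqP; rewrite gt_eqF ?next_u_gt0.
rewrite next_wE; split; last exact: norm2_normalize.
by move=> k; rewrite divr_gt0 ?next_u_gt0 ?sqrtr_gt0.
Qed.

End Update.

Lemma argmax_lin_gap {R : realType} {K : nat} {D0 B eps : R}
    {m v w ri rs : 'I_K -> R} :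
  0 < eps -> is_argmax_lin D0 B m v w ri -> inG D0 B m v rs ->
  ~ terminates eps w ri rs -> 0 < dotp w (fun k => ri k - rs k).
Proof.
move=> eps_gt0 [_ ri_max] /ri_max rs_le /negP; rewrite -leNgt dotpBr.
by rewrite ger0_norm ?subr_ge0 // => /(lt_le_trans eps_gt0).
Qed.

Theorem corollary3 (R : realType) (K : nat) (hK : (1 <= K)%N)
  (D0 B : R) (hD0 : 0 < D0) (hB : 0 < B)
  (m v : 'I_K -> R) (hm : forall k, 0 <= m k) (hv : forall k, 0 <= v k)
  (eps : R) (heps : 0 < eps)
  (rs : 'I_K -> R) (hrs : is_argmax_f D0 B m v rs)
  (w r : nat -> 'I_K -> R)
  (hw1 : w 1%N = @w_init R K)
  (hr : forall i : nat, (1 <= i)%N ->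
          (forall j : nat, (1 <= j < i)%N -> ~ terminates eps (w j) (r j) rs) ->
          is_argmax_lin D0 B m v (w i) (r i))
  (hwnext : forall i : nat, (1 <= i)%N ->
          (forall j : nat, (1 <= j <= i)%N -> ~ terminates eps (w j) (r j) rs) ->
          w i.+1 = next_w (w i) (r i) rs) :
  forall i : nat, (1 <= i)%N ->
    (forall j : nat, (1 <= j <= i)%N -> ~ terminates eps (w j) (r j) rs) ->
    (forall k, 0 < w i k) -> norm2 (w i) = 1 ->
    (forall k, 0 < w i.+1 k) /\ norm2 (w i.+1) = 1.
Proof.
move=> i i_ge1 running w_gt0 _.
have ri_max : is_argmax_lin D0 B m v (w i) (r i).
  by apply: hr i_ge1 _ => j /andP[j_ge1 /ltnW j_le]; apply: running; rewrite j_ge1.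
have [rs_in _ _] := hrs.
have i_running : (1 <= i <= i)%N by rewrite i_ge1 leqnn.
have gap_gt0 := argmax_lin_gap heps ri_max rs_in (running i i_running).
by rewrite (hwnext i i_ge1 running); exact: (next_w_gt0_unit hK w_gt0 gap_gt0).
Qed.
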